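(* Let $\pi\ge1$. For every input $\sigma=(g_1,\dots,g_T)\in\Sigma$ and every threshold $p\in[m,M]$, the outputs $\bar v_t$ of CR-Pursuit($\pi$) satisfy $$\sum_{t\in[T]:\ p(t)\le p} g_t(\bar v_t)\ \le\ \frac{1}{\pi}\,p\,\Delta,$$ where $p(t)=g_t'(0)$.
   Context: Fix $\Delta>0$ and $0<m\le M$. Let $\mathcal G$ be the family of all functions $g:[0,\Delta]\to\mathbb{R}$ that are concave, increasing and differentiable on $[0,\Delta]$ with $g(0)=0$ and $g'(0)\in[m,M]$. An input is a finite sequence $\sigma=(g_1,\dots,g_T)$, $T\ge1$, $g_t\in\mathcal G$; $\Sigma$ is the set of all inputs; $\sigma^{[1:t]}=(g_1,\dots,g_t)$ ($\sigma^{[1:0]}$ empty). $\eta_{OPT}(\sigma^{[1:t]})$ is the optimal value of $\max\sum_{s=1}^t g_s(v_s)$ s.t. $\sum_{s=1}^t v_s\le\Delta$, $v_s\ge0$ (and $0$ for the empty sequence). For $\pi\ge1$, CR-Pursuit($\pi$) outputs at time $t$ the smallest $\bar v_t\in[0,\Delta]$ with $g_t(\bar v_t)=\frac1\pi\big[\eta_{OPT}(\sigma^{[1:t]})-\eta_{OPT}(\sigma^{[1:t-1]})\big]$. *)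

From Stdlib Require Import Reals Lra Lia Classical ClassicalEpsilon.
Open Scope R_scope.

Fixpoint sum1 (f : nat -> R) (n : nat) : R :=
  match n with
  | O => 0
  | S k => sum1 f k + f (S k)
  end.

(* derivative of g at x in [0,Delta], relative to the domain [0,Delta]
   (one-sided at the endpoints) *)
Definition has_deriv_within (Delta : R) (g : R -> R) (x l : R) : Prop :=
  forall eps, 0 < eps -> exists delta, 0 < delta /\
    forall y, 0 <= y <= Delta -> y <> x -> Rabs (y - x) < delta ->
      Rabs ((g y - g x) / (y - x) - l) < eps.

Definition differentiable_on (Delta : R) (g : R -> R) : Prop :=
  forall x, 0 <= x <= Delta -> exists l, has_deriv_within Delta g x l.

Definition concave_on (Delta : R) (g : R -> R) : Prop :=
  forall x y lam, 0 <= x <= Delta -> 0 <= y <= Delta -> 0 <= lam <= 1 ->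
    lam * g x + (1 - lam) * g y <= g (lam * x + (1 - lam) * y).

(* "increasing" read as non-decreasing *)
Definition increasing_on (Delta : R) (g : R -> R) : Prop :=
  forall x y, 0 <= x <= Delta -> 0 <= y <= Delta -> x <= y -> g x <= g y.

(* g'(0): the (unique, since Delta > 0) right derivative at 0 *)
Definition deriv0 (Delta : R) (g : R -> R) : R :=
  epsilon (inhabits 0) (fun l => has_deriv_within Delta g 0 l).

Definition in_G (Delta m M : R) (g : R -> R) : Prop :=
  concave_on Delta g /\ increasing_on Delta g /\ differentiable_on Delta g /\
  g 0 = 0 /\
  (exists l, has_deriv_within Delta g 0 l /\ m <= l <= M).

Definition feasible_vals (Delta : R) (g : nat -> R -> R) (t : nat) (x : R) : Prop :=
  exists v : nat -> R,
    (forall s, (1 <= s <= t)%nat -> 0 <= v s) /\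
    sum1 v t <= Delta /\
    x = sum1 (fun s => g s (v s)) t.

Definition eta_OPT (Delta : R) (g : nat -> R -> R) (t : nat) : R :=
  epsilon (inhabits 0) (fun x => is_lub (feasible_vals Delta g t) x).

Definition cr_pursuit (Delta pi : R) (g : nat -> R -> R) (t : nat) : R :=
  let c := / pi * (eta_OPT Delta g t - eta_OPT Delta g (t - 1)) in
  epsilon (inhabits 0) (fun v =>
    0 <= v <= Delta /\ g t v = c /\
    forall w, 0 <= w <= Delta -> g t w = c -> v <= w).

From Stdlib Require Import Reals Lra Lia Classical ClassicalEpsilon.
Open Scope R_scope.

(* At step [t], CR-Pursuit(pi) earns exactly [1/pi] of the increment
   [eta_t - eta_(t-1)] of the offline optimum.  Compare [eta_t] with the
   optimum [Y_t] of the same prefix in which unused capacity is sold at the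
   price [p]: [Y_0 = p Delta], [eta_T <= Y_T], and the potential [Y_t - eta_t]
   never increases (an exchange argument mixing two allocations, using
   concavity).  At a step with [g_t'(0) <= p] even [Y_t] does not increase,
   since [g_t v <= g_t'(0) v <= p v]; so the increments of [eta] at those steps
   are paid for by the potential and sum to at most [p Delta]. *)

Lemma sum1_ext f h n :
  (forall s, (1 <= s <= n)%nat -> f s = h s) -> sum1 f n = sum1 h n.
Proof.
  induction n as [|n IH]; intros Hfh; simpl; [reflexivity|].
  rewrite IH by (intros; apply Hfh; lia). rewrite Hfh by lia. reflexivity.
Qed.

Lemma sum1_le f h n :
  (forall s, (1 <= s <= n)%nat -> f s <= h s) -> sum1 f n <= sum1 h n.
Proof.
  induction n as [|n IH]; intros Hfh; simpl; [lra|].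
  assert (sum1 f n <= sum1 h n) by (apply IH; intros; apply Hfh; lia).
  assert (f (S n) <= h (S n)) by (apply Hfh; lia).
  lra.
Qed.

Lemma sum1_add f h n : sum1 (fun s => f s + h s) n = sum1 f n + sum1 h n.
Proof. induction n as [|n IH]; simpl; [|rewrite IH]; ring. Qed.

Lemma sum1_scal c f n : sum1 (fun s => c * f s) n = c * sum1 f n.
Proof. induction n as [|n IH]; simpl; [|rewrite IH]; ring. Qed.

Lemma sum1_zero n : sum1 (fun _ => 0) n = 0.
Proof. induction n as [|n IH]; simpl; [|rewrite IH]; ring. Qed.

Lemma sum1_nonneg f n :
  (forall s, (1 <= s <= n)%nat -> 0 <= f s) -> 0 <= sum1 f n.
Proof. intros Hf. rewrite <- (sum1_zero n). now apply sum1_le. Qed.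

Lemma term_le_sum1 v n s :
  (forall k, (1 <= k <= n)%nat -> 0 <= v k) -> (1 <= s <= n)%nat -> v s <= sum1 v n.
Proof.
  induction n as [|n IH]; intros Hv Hs; [lia|]. simpl.
  assert (0 <= v (S n)) by (apply Hv; lia).
  destruct (Nat.eq_dec s (S n)) as [->|Hne].
  - assert (0 <= sum1 v n) by (apply sum1_nonneg; intros; apply Hv; lia). lra.
  - assert (v s <= sum1 v n) by (apply IH; [intros; apply Hv|]; lia). lra.
Qed.

Lemma epsilon_is_lub (A : R -> Prop) :
  bound A -> (exists x, A x) -> is_lub A (epsilon (inhabits 0) (is_lub A)).
Proof.
  intros Hb Hne. apply epsilon_spec.
  destruct (completeness A Hb Hne) as [x Hx]. eauto.
Qed.

Lemma lub_add_le A B a b K :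
  is_lub A a -> is_lub B b -> (forall x y, A x -> B y -> x + y <= K) -> a + b <= K.
Proof.
  intros [_ Ha] [_ Hb] HK.
  assert (b <= K - a); [|lra].
  apply Hb. intros y By.
  assert (a <= K - y); [|lra].
  apply Ha. intros x Ax. specialize (HK x y Ax By). lra.
Qed.

Lemma has_deriv_within_continuous Delta f x l :
  has_deriv_within Delta f x l ->
  forall e, 0 < e -> exists d, 0 < d /\
    forall y, 0 <= y <= Delta -> Rabs (y - x) < d -> Rabs (f y - f x) < e.
Proof.
  intros Hd e He. destruct (Hd 1 ltac:(lra)) as [d1 [Hd1 Hq]].
  set (L := Rabs l + 1).
  assert (HL : 0 < L) by (unfold L; pose proof (Rabs_pos l); lra).
  exists (Rmin d1 (e / L)). split; [apply Rmin_pos; [lra|apply Rdiv_lt_0_compat; lra]|].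
  intros y Hy Hyx. destruct (Req_dec y x) as [->|Hne].
  { unfold Rminus. rewrite Rplus_opp_r, Rabs_R0. lra. }
  pose proof (Rmin_l d1 (e / L)). pose proof (Rmin_r d1 (e / L)).
  specialize (Hq y Hy Hne ltac:(lra)).
  set (q := (f y - f x) / (y - x)) in Hq.
  assert (Hq' : Rabs q < L).
  { unfold L. replace q with ((q - l) + l) by ring.
    pose proof (Rabs_triang (q - l) l). lra. }
  replace (f y - f x) with (q * (y - x)) by (unfold q; field; lra).
  rewrite Rabs_mult.
  assert (Rabs q * Rabs (y - x) <= L * Rabs (y - x))
    by (apply Rmult_le_compat_r; [apply Rabs_pos|lra]).
  assert (L * Rabs (y - x) < L * (e / L)) by (apply Rmult_lt_compat_l; lra).
  replace (L * (e / L)) with e in * by (field; lra).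
  lra.
Qed.

(* If [f x > d x], the concavity chord from [0] to [x] keeps the difference
   quotient [f y / y] at least [f x / x > d] for all small [y], contradicting
   [f'(0) = d]. *)
Lemma concave_le_tangent0 Delta f d x :
  concave_on Delta f -> f 0 = 0 -> has_deriv_within Delta f 0 d ->
  0 <= x <= Delta -> f x <= d * x.
Proof.
  intros Hc H0 Hd Hx. destruct (Req_dec x 0) as [->|Hx0]; [rewrite H0; lra|].
  apply Rnot_lt_le. intro Hlt.
  set (k := f x / x).
  assert (Hk : d < k).
  { apply Rmult_lt_reg_r with x; [lra|]. unfold k.
    replace (f x / x * x) with (f x) by (field; lra). lra. }
  destruct (Hd (k - d) ltac:(lra)) as [d1 [Hd1 Hq]].
  set (y := Rmin x (d1 / 2)).
  assert (Hy0 : 0 < y) by (apply Rmin_pos; lra).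
  assert (y <= x) by apply Rmin_l. assert (y <= d1 / 2) by apply Rmin_r.
  assert (Hlam : 0 <= y / x <= 1).
  { split; apply Rmult_le_reg_r with x; try lra;
      replace (y / x * x) with y by (field; lra); lra. }
  assert (Hchord := Hc x 0 (y / x) ltac:(lra) ltac:(lra) Hlam).
  replace (y / x * x + (1 - y / x) * 0) with y in Hchord by (field; lra).
  replace (y / x * f x + (1 - y / x) * f 0) with (k * y) in Hchord
    by (unfold k; rewrite H0; field; lra).
  specialize (Hq y ltac:(lra) ltac:(lra)
                ltac:(rewrite Rminus_0_r, Rabs_pos_eq; lra)).
  rewrite H0, !Rminus_0_r in Hq. apply Rabs_def2 in Hq.
  assert (f y / y * y < k * y) by (apply Rmult_lt_compat_r; lra).
  replace (f y / y * y) with (f y) in * by (field; lra).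
  lra.
Qed.

(* The least solution is the supremum of the sublevel set [{x | f x < c}];
   continuity rules out [f v < c] and [f v > c] there. *)
Lemma least_level_point Delta f c :
  0 <= Delta -> differentiable_on Delta f -> increasing_on Delta f ->
  f 0 <= c <= f Delta ->
  exists v, 0 <= v <= Delta /\ f v = c /\
    forall w, 0 <= w <= Delta -> f w = c -> v <= w.
Proof.
  intros HD Hdiff Hinc Hc.
  destruct (Req_dec c (f 0)) as [->|Hc0].
  { exists 0. split; [lra|]. split; [reflexivity|]. intros w Hw _; lra. }
  set (B := fun x => 0 <= x <= Delta /\ f x < c).
  assert (HB0 : B 0) by (unfold B; lra).
  destruct (completeness B ltac:(exists Delta; intros x [Hx _]; lra)
              (ex_intro _ 0 HB0)) as [v [Hub Hleast]].
  assert (Hv : 0 <= v <= Delta) by (split; [apply Hub | apply Hleast; intros x [Hx _]]; auto; lra).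
  assert (Hmin : forall w, 0 <= w <= Delta -> f w = c -> v <= w).
  { intros w Hw Hfw. apply Hleast. intros x [Hx Hfx].
    apply Rnot_lt_le. intro Hwx.
    assert (f w <= f x) by (apply Hinc; lra). lra. }
  exists v. split; [exact Hv|]. split; [|exact Hmin].
  destruct (Hdiff v Hv) as [l Hl].
  pose proof (has_deriv_within_continuous _ _ _ _ Hl) as Hcont.
  destruct (Rtotal_order (f v) c) as [Hlt|[Heq|Hgt]]; auto; exfalso.
  - assert (Hv2 : v < Delta).
    { destruct (Req_dec v Delta) as [E|E]; [rewrite E in Hlt|]; lra. }
    destruct (Hcont (c - f v) ltac:(lra)) as [d [Hd Hy]].
    set (y := Rmin Delta (v + d / 2)).
    assert (y <= Delta) by apply Rmin_l. assert (y <= v + d / 2) by apply Rmin_r.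
    assert (v < y) by (apply Rmin_glb_lt; lra).
    specialize (Hy y ltac:(lra) ltac:(rewrite Rabs_pos_eq; lra)).
    apply Rabs_def2 in Hy.
    assert (y <= v) by (apply Hub; unfold B; lra). lra.
  - destruct (Hcont (f v - c) ltac:(lra)) as [d [Hd Hy]].
    assert (Hex : exists x, B x /\ v - d / 2 < x).
    { apply NNPP. intro Hn. assert (v <= v - d / 2); [|lra].
      apply Hleast. intros x Bx. apply Rnot_lt_le. intro. apply Hn. eauto. }
    destruct Hex as [x [[Hx Hfx] Hxv]].
    assert (x <= v) by (apply Hub; unfold B; split; assumption).
    specialize (Hy x Hx ltac:(rewrite Rabs_left1; lra)).
    apply Rabs_def2 in Hy. lra.
Qed.

(* [Y_t]: the optimum of the prefix [g_1, ..., g_t] when unused capacity is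
   sold at the price [p]. *)
Definition priced_vals (Delta p : R) (g : nat -> R -> R) (t : nat) (y : R) : Prop :=
  exists v : nat -> R,
    (forall s, (1 <= s <= t)%nat -> 0 <= v s) /\
    sum1 v t <= Delta /\
    y = sum1 (fun s => g s (v s)) t + p * (Delta - sum1 v t).

Definition priced_OPT (Delta p : R) (g : nat -> R -> R) (t : nat) : R :=
  epsilon (inhabits 0) (fun y => is_lub (priced_vals Delta p g t) y).

Lemma deriv0_spec Delta f : 0 <= Delta -> differentiable_on Delta f ->
  has_deriv_within Delta f 0 (deriv0 Delta f).
Proof.
  intros HD Hf. destruct (Hf 0 ltac:(lra)) as [l Hl].
  unfold deriv0. apply epsilon_spec. eauto.
Qed.

Lemma cr_pursuit_value Delta pi g t :
  let c := / pi * (eta_OPT Delta g t - eta_OPT Delta g (t - 1)) in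
  (exists v, 0 <= v <= Delta /\ g t v = c /\
     forall w, 0 <= w <= Delta -> g t w = c -> v <= w) ->
  g t (cr_pursuit Delta pi g t) = c.
Proof. intros c Hex. apply (epsilon_spec (inhabits 0) _ Hex). Qed.

Lemma feasible_vals_extend Delta g n w y :
  (forall s, (1 <= s <= n)%nat -> 0 <= w s) -> 0 <= y -> sum1 w n + y <= Delta ->
  feasible_vals Delta g (S n) (sum1 (fun s => g s (w s)) n + g (S n) y).
Proof.
  intros Hw Hy Hsum.
  set (w' := fun s => if Nat.eq_dec s (S n) then y else w s).
  assert (Hw' : forall s, (1 <= s <= n)%nat -> w' s = w s).
  { intros s Hs. unfold w'. destruct (Nat.eq_dec s (S n)); [lia|reflexivity]. }
  assert (Hlast : w' (S n) = y).
  { unfold w'. destruct (Nat.eq_dec (S n) (S n)); [reflexivity|lia]. }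
  exists w'. split.
  { intros s Hs. destruct (Nat.eq_dec s (S n)) as [->|Hne]; [lra|].
    rewrite Hw' by lia. apply Hw; lia. }
  simpl. rewrite Hlast, (sum1_ext w' w) by exact Hw'.
  rewrite (sum1_ext (fun s => g s (w' s)) (fun s => g s (w s)))
    by (intros s Hs; rewrite Hw' by exact Hs; reflexivity).
  split; [lra|reflexivity].
Qed.

Section Offline_optimum.

Variables (Delta : R) (T : nat) (g : nat -> R -> R).
Hypothesis Delta_ge0 : 0 <= Delta.
Hypothesis g_incr : forall t, (1 <= t <= T)%nat -> increasing_on Delta (g t).
Hypothesis g_conc : forall t, (1 <= t <= T)%nat -> concave_on Delta (g t).
Hypothesis g_diff : forall t, (1 <= t <= T)%nat -> differentiable_on Delta (g t).
Hypothesis g_zero : forall t, (1 <= t <= T)%nat -> g t 0 = 0.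

Lemma allocation_bounds v t s :
  (forall k, (1 <= k <= t)%nat -> 0 <= v k) -> sum1 v t <= Delta ->
  (1 <= s <= t)%nat -> 0 <= v s <= Delta.
Proof.
  intros Hv Hsum Hs. pose proof (term_le_sum1 v t s Hv Hs). pose proof (Hv s Hs). lra.
Qed.

Lemma allocation_value_le t v : (t <= T)%nat ->
  (forall s, (1 <= s <= t)%nat -> 0 <= v s) -> sum1 v t <= Delta ->
  sum1 (fun s => g s (v s)) t <= sum1 (fun s => g s Delta) t.
Proof.
  intros Ht Hv Hsum. apply sum1_le. intros s Hs.
  pose proof (allocation_bounds v t s Hv Hsum Hs).
  apply g_incr; lra || lia.
Qed.

Lemma eta_OPT_lub t : (t <= T)%nat -> is_lub (feasible_vals Delta g t) (eta_OPT Delta g t).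
Proof.
  intros Ht. apply epsilon_is_lub.
  - exists (sum1 (fun s => g s Delta) t). intros x [v [Hv [Hsum ->]]].
    now apply allocation_value_le.
  - exists (sum1 (fun s => g s 0) t), (fun _ => 0).
    rewrite sum1_zero. split; [intros; lra|]. split; [lra|reflexivity].
Qed.

Lemma eta_OPT_step n : (S n <= T)%nat ->
  eta_OPT Delta g n <= eta_OPT Delta g (S n) <= eta_OPT Delta g n + g (S n) Delta.
Proof.
  intros Hn. pose proof (g_zero (S n) ltac:(lia)) as Hg0.
  destruct (eta_OPT_lub n ltac:(lia)) as [Ub Least].
  destruct (eta_OPT_lub (S n) Hn) as [UbS LeastS].
  split.
  - apply Least. intros x [w [Hw [Hsum ->]]].
    pose proof (feasible_vals_extend Delta g n w 0 Hw ltac:(lra) ltac:(lra)) as Hext.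
    rewrite Hg0, Rplus_0_r in Hext. exact (UbS _ Hext).
  - apply LeastS. intros x [u [Hu [Hsum ->]]]. simpl in Hsum |- *.
    assert (Hu' : forall s, (1 <= s <= n)%nat -> 0 <= u s) by (intros; apply Hu; lia).
    assert (0 <= u (S n)) by (apply Hu; lia).
    assert (0 <= sum1 u n) by (apply sum1_nonneg; exact Hu').
    assert (sum1 (fun s => g s (u s)) n <= eta_OPT Delta g n)
      by (apply Ub; exists u; split; [exact Hu'|split; [lra|reflexivity]]).
    assert (g (S n) (u (S n)) <= g (S n) Delta) by (apply g_incr; lra || lia).
    lra.
Qed.

Lemma cr_pursuit_step pi n : 1 <= pi -> (S n <= T)%nat ->
  g (S n) (cr_pursuit Delta pi g (S n))
    = / pi * (eta_OPT Delta g (S n) - eta_OPT Delta g n).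
Proof.
  intros Hpi Hn.
  pose proof (cr_pursuit_value Delta pi g (S n)) as Hval.
  replace (S n - 1)%nat with n in Hval by lia. apply Hval.
  destruct (eta_OPT_step n Hn) as [Hmono Hjump].
  assert (0 < / pi) by (apply Rinv_0_lt_compat; lra).
  assert (/ pi <= 1) by (rewrite <- Rinv_1; apply Rinv_le_contravar; lra).
  assert (0 <= g (S n) Delta)
    by (rewrite <- (g_zero (S n)) by lia; apply g_incr; lra || lia).
  apply least_level_point; auto; [apply g_diff | apply g_incr|]; try lia.
  rewrite g_zero by lia. split; [apply Rmult_le_pos|]; nra.
Qed.

Variable p : R.
Hypothesis p_ge0 : 0 <= p.

Lemma priced_OPT_lub t : (t <= T)%nat ->
  is_lub (priced_vals Delta p g t) (priced_OPT Delta p g t).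
Proof.
  intros Ht. apply epsilon_is_lub.
  - exists (sum1 (fun s => g s Delta) t + p * Delta). intros x [v [Hv [Hsum ->]]].
    pose proof (allocation_value_le t v Ht Hv Hsum).
    pose proof (sum1_nonneg v t Hv).
    assert (p * (Delta - sum1 v t) <= p * Delta) by (apply Rmult_le_compat_l; lra).
    lra.
  - exists (sum1 (fun s => g s 0) t + p * (Delta - 0)), (fun _ => 0).
    rewrite sum1_zero. split; [intros; lra|]. split; [lra|reflexivity].
Qed.

Lemma eta_OPT_le_priced_OPT t : (t <= T)%nat -> eta_OPT Delta g t <= priced_OPT Delta p g t.
Proof.
  intros Ht. apply (eta_OPT_lub t Ht). intros x [v [Hv [Hsum ->]]].
  assert (Hy : priced_vals Delta p g t (sum1 (fun s => g s (v s)) t + p * (Delta - sum1 v t)))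
    by (exists v; auto).
  pose proof (proj1 (priced_OPT_lub t Ht) _ Hy).
  assert (0 <= p * (Delta - sum1 v t)) by (apply Rmult_le_pos; lra).
  lra.
Qed.

(* Concavity gives [g(u) + g(z) >= g(v) + g(w)] coordinatewise for the two
   convex combinations [u] and [z] of [v] and [w] with weights [lam], [1 - lam]. *)
Lemma exchange_convex n v w lam : (S n <= T)%nat ->
  (forall s, (1 <= s <= S n)%nat -> 0 <= v s) -> sum1 v (S n) <= Delta ->
  (forall s, (1 <= s <= n)%nat -> 0 <= w s) -> sum1 w n <= Delta ->
  0 <= lam <= 1 ->
  lam * sum1 v n + (1 - lam) * sum1 w n <= Delta - v (S n) ->
  (1 - lam) * sum1 v n + lam * sum1 w n <= sum1 v (S n) ->
  exists a b, feasible_vals Delta g (S n) a /\ priced_vals Delta p g n b /\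
    sum1 (fun s => g s (v s)) (S n) + p * (Delta - sum1 v (S n))
      + sum1 (fun s => g s (w s)) n <= a + b.
Proof.
  intros Hn Hv Hvsum Hw Hwsum Hlam Hu_fits Hz_short. simpl in Hvsum, Hz_short |- *.
  set (u := fun s => lam * v s + (1 - lam) * w s).
  set (z := fun s => (1 - lam) * v s + lam * w s).
  assert (Hv' : forall s, (1 <= s <= n)%nat -> 0 <= v s) by (intros; apply Hv; lia).
  assert (0 <= v (S n)) by (apply Hv; lia).
  assert (Hsu : sum1 u n = lam * sum1 v n + (1 - lam) * sum1 w n)
    by (unfold u; rewrite sum1_add, !sum1_scal; reflexivity).
  assert (Hsz : sum1 z n = (1 - lam) * sum1 v n + lam * sum1 w n)
    by (unfold z; rewrite sum1_add, !sum1_scal; reflexivity).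
  assert (Hu : forall s, (1 <= s <= n)%nat -> 0 <= u s)
    by (intros s Hs; pose proof (Hv' s Hs); pose proof (Hw s Hs); unfold u; nra).
  assert (Hz : forall s, (1 <= s <= n)%nat -> 0 <= z s)
    by (intros s Hs; pose proof (Hv' s Hs); pose proof (Hw s Hs); unfold z; nra).
  exists (sum1 (fun s => g s (u s)) n + g (S n) (v (S n))),
         (sum1 (fun s => g s (z s)) n + p * (Delta - sum1 z n)).
  split; [apply feasible_vals_extend; auto; lra|].
  split; [exists z; split; [exact Hz|split; [lra|reflexivity]]|].
  assert (Hconc : sum1 (fun s => g s (v s)) n + sum1 (fun s => g s (w s)) n <=
                  sum1 (fun s => g s (u s)) n + sum1 (fun s => g s (z s)) n).
  { rewrite <- !sum1_add. apply sum1_le. intros s Hs.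
    pose proof (allocation_bounds v n s Hv' ltac:(lra) Hs).
    pose proof (allocation_bounds w n s Hw Hwsum Hs).
    pose proof (g_conc s ltac:(lia) (v s) (w s) lam ltac:(lra) ltac:(lra) Hlam).
    pose proof (g_conc s ltac:(lia) (v s) (w s) (1 - lam) ltac:(lra) ltac:(lra) ltac:(lra)).
    replace (1 - (1 - lam)) with lam in * by ring.
    unfold u, z. lra. }
  assert (p * (Delta - (sum1 v n + v (S n))) <= p * (Delta - sum1 z n))
    by (apply Rmult_le_compat_l; lra).
  lra.
Qed.

Lemma exchange n v w : (S n <= T)%nat ->
  (forall s, (1 <= s <= S n)%nat -> 0 <= v s) -> sum1 v (S n) <= Delta ->
  (forall s, (1 <= s <= n)%nat -> 0 <= w s) -> sum1 w n <= Delta ->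
  exists a b, feasible_vals Delta g (S n) a /\ priced_vals Delta p g n b /\
    sum1 (fun s => g s (v s)) (S n) + p * (Delta - sum1 v (S n))
      + sum1 (fun s => g s (w s)) n <= a + b.
Proof.
  intros Hn Hv Hvsum Hw Hwsum.
  assert (0 <= v (S n)) by (apply Hv; lia).
  pose proof Hvsum as HvS. simpl in HvS.
  destruct (Rle_dec (sum1 w n) (Delta - v (S n))) as [Hfits|Hover].
  - apply (exchange_convex n v w 0); auto; simpl; lra.
  - set (lam := (sum1 w n - (Delta - v (S n))) / (sum1 w n - sum1 v n)).
    assert (Hgap : 0 < sum1 w n - sum1 v n) by lra.
    assert (Hlam : lam * (sum1 w n - sum1 v n) = sum1 w n - (Delta - v (S n)))
      by (unfold lam; field; lra).
    apply (exchange_convex n v w lam); auto; simpl.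
    + split; apply Rmult_le_reg_r with (sum1 w n - sum1 v n); lra.
    + nra.
    + nra.
Qed.

Lemma priced_OPT_exchange n : (S n <= T)%nat ->
  priced_OPT Delta p g (S n) + eta_OPT Delta g n
    <= eta_OPT Delta g (S n) + priced_OPT Delta p g n.
Proof.
  intros Hn.
  apply (lub_add_le _ _ _ _ _ (priced_OPT_lub (S n) Hn) (eta_OPT_lub n ltac:(lia))).
  intros x y [v [Hv [Hvsum ->]]] [w [Hw [Hwsum ->]]].
  destruct (exchange n v w Hn Hv Hvsum Hw Hwsum) as [a [b [Ha [Hb Hab]]]].
  pose proof (proj1 (eta_OPT_lub (S n) Hn) a Ha).
  pose proof (proj1 (priced_OPT_lub n ltac:(lia)) b Hb).
  lra.
Qed.

Lemma priced_OPT_step_flat n : (S n <= T)%nat -> deriv0 Delta (g (S n)) <= p ->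
  priced_OPT Delta p g (S n) <= priced_OPT Delta p g n.
Proof.
  intros Hn Hdp. set (d := deriv0 Delta (g (S n))) in Hdp.
  pose proof (deriv0_spec Delta (g (S n)) Delta_ge0 (g_diff (S n) ltac:(lia))) as Hd.
  pose proof (g_zero (S n) ltac:(lia)) as Hg0.
  apply (priced_OPT_lub (S n) Hn). intros x [v [Hv [Hsum ->]]]. simpl in Hsum |- *.
  assert (Hv' : forall s, (1 <= s <= n)%nat -> 0 <= v s) by (intros; apply Hv; lia).
  assert (0 <= v (S n)) by (apply Hv; lia).
  assert (0 <= sum1 v n) by (apply sum1_nonneg; exact Hv').
  assert (Hy : priced_vals Delta p g n
                 (sum1 (fun s => g s (v s)) n + p * (Delta - sum1 v n)))
    by (exists v; split; [exact Hv'|split; [lra|reflexivity]]).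
  pose proof (proj1 (priced_OPT_lub n ltac:(lia)) _ Hy).
  pose proof (concave_le_tangent0 Delta (g (S n)) d (v (S n))
                (g_conc (S n) ltac:(lia)) Hg0 Hd ltac:(lra)).
  assert (d * v (S n) <= p * v (S n)) by (apply Rmult_le_compat_r; lra).
  lra.
Qed.

Lemma selected_increments_le n : (n <= T)%nat ->
  sum1 (fun t => if Rle_dec (deriv0 Delta (g t)) p
                 then eta_OPT Delta g t - eta_OPT Delta g (t - 1) else 0) n
  + priced_OPT Delta p g n - eta_OPT Delta g n <= p * Delta.
Proof.
  induction n as [|n IH]; intros Hn; simpl.
  - assert (priced_OPT Delta p g 0 <= p * Delta).
    { apply (priced_OPT_lub 0 Hn). intros x [v [_ [_ ->]]]. simpl. lra. }
    assert (0 <= eta_OPT Delta g 0).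
    { apply (eta_OPT_lub 0 Hn). exists (fun _ => 0). simpl.
      split; [intros; lia|]. split; [lra|reflexivity]. }
    lra.
  - specialize (IH ltac:(lia)). replace (n - 0)%nat with n by lia.
    pose proof (priced_OPT_exchange n Hn).
    destruct (Rle_dec (deriv0 Delta (g (S n))) p) as [Hd|Hd].
    + pose proof (priced_OPT_step_flat n Hn Hd). lra.
    + lra.
Qed.

End Offline_optimum.

Theorem lemma10 (Delta m M pi : R) (T : nat) (g : nat -> R -> R) (p : R) :
  0 < Delta -> 0 < m -> m <= M -> 1 <= pi -> (1 <= T)%nat ->
  (forall t, (1 <= t <= T)%nat -> in_G Delta m M (g t)) ->
  m <= p <= M ->
  sum1 (fun t => if Rle_dec (deriv0 Delta (g t)) p
                 then g t (cr_pursuit Delta pi g t) else 0) T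
  <= / pi * p * Delta.
Proof.
  intros HD Hm _ Hpi _ HG Hp.
  assert (Hconc : forall t, (1 <= t <= T)%nat -> concave_on Delta (g t))
    by (intros t Ht; apply (HG t Ht)).
  assert (Hincr : forall t, (1 <= t <= T)%nat -> increasing_on Delta (g t))
    by (intros t Ht; apply (HG t Ht)).
  assert (Hdiff : forall t, (1 <= t <= T)%nat -> differentiable_on Delta (g t))
    by (intros t Ht; apply (HG t Ht)).
  assert (Hzero : forall t, (1 <= t <= T)%nat -> g t 0 = 0)
    by (intros t Ht; apply (HG t Ht)).
  rewrite (sum1_ext _ (fun t => / pi * (if Rle_dec (deriv0 Delta (g t)) p
             then eta_OPT Delta g t - eta_OPT Delta g (t - 1) else 0))).
  2: { intros [|n] Ht; [lia|]. destruct (Rle_dec _ p); [|ring].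
       rewrite (cr_pursuit_step Delta T g ltac:(lra) Hincr Hdiff Hzero pi n Hpi)
         by lia.
       replace (S n - 1)%nat with n by lia. reflexivity. }
  rewrite sum1_scal, Rmult_assoc.
  apply Rmult_le_compat_l; [left; apply Rinv_0_lt_compat; lra|].
  pose proof (selected_increments_le Delta T g ltac:(lra) Hincr Hconc Hdiff Hzero
                p ltac:(lra) T (le_n T)).
  pose proof (eta_OPT_le_priced_OPT Delta T g ltac:(lra) Hincr p ltac:(lra) T (le_n T)).
  lra.
Qed.
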